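(* On the free algebra $\mathbb{C}\langle x,y\rangle$ each of the following pairs consists of two compatible Poisson brackets (each is a Poisson structure and their Schouten bracket vanishes): (1) $[xx^*,x^*]+[yy^*,x^*]$ and $[yy^*,xy^*]-[y^*,x^2x^*+xyy^*]$; (2) $[xx^*,x^*]+[yx^*,y^*]$ and $[yy^*,yxx^*+y^2y^*]$; (3) $[xy^*,xx^*]$ and $[x^2x^*+xyy^*,yx^*]+[yxx^*+y^2y^*,xx^*+yy^*]$.
   Context: $\mathbb{C}\langle x,y\rangle$ is the path algebra of the quiver $Q$ with one vertex and two loops $x,y$; the double quiver $\bar Q$ has loops $x,y,x^*,y^*$, and $\mathbb{C}\bar Q=\mathbb{C}\langle x,y,x^*,y^*\rangle$, graded by the number $r$ of starred letters in a monomial. $\mathcal{V}Q$ is the quotient of $\mathbb{C}\bar Q$ by the span of $PR-(-1)^{pr}RP$ for $P,R$ homogeneous of degrees $p,r$. For $w\in\{x,y,x^*,y^*\}$, $D_w(x_1\cdots x_n)=\sum_{i:x_i=w}(-1)^{\lambda_i\mu_i}x_{i+1}\cdots x_nx_1\cdots x_{i-1}$, $\lambda_i$ (resp. $\mu_i$) the number of starred letters among $x_{i+1},\dots,x_n$ (resp. $x_1,\dots,x_i$). For $\gamma\in\mathcal{V}^rQ,\delta\in\mathcal{V}^sQ$: $[\gamma,\delta]_{\mathcal V}=\sum_{a\in\{x,y\}}\big(D_{a^*}(\gamma)D_a(\delta)-(-1)^{(r-1)(s-1)}D_{a^*}(\delta)D_a(\gamma)\big)$ modulo the relations. A Poisson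 bracket (structure) is $\Pi\in\mathcal{V}^2Q$ with $[\Pi,\Pi]_{\mathcal V}=0$; $\Pi_1,\Pi_2$ are compatible if $[\Pi_i,\Pi_j]_{\mathcal V}=0$ for $i,j=1,2$. Here $[u,v]=uv-vu$ in $\mathcal{V}Q$. *)

From HB Require Import structures.
From mathcomp Require Import all_boot all_algebra.
From mathcomp Require Import complex Rstruct.
Set Implicit Arguments. Unset Strict Implicit. Unset Printing Implicit Defensive.
Import GRing.Theory.
Local Open Scope ring_scope.

Definition CC : Type := complex Rdefinitions.R.

(** Letters of the double quiver: the four loops x, y, x^*, y^*. *)
Inductive letter := Lx | Ly | Lxs | Lys.

Definition letter_eqb (a b : letter) : bool :=
  match a, b with
  | Lx, Lx | Ly, Ly | Lxs, Lxs | Lys, Lys => true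
  | _, _ => false
  end.

Lemma letter_eqP : Equality.axiom letter_eqb.
Proof. by case; case; constructor. Qed.

HB.instance Definition _ := hasDecEq.Build letter letter_eqP.

Definition starred (a : letter) : bool :=
  match a with Lxs | Lys => true | _ => false end.

Definition star (a : letter) : letter :=
  match a with Lx => Lxs | Ly => Lys | b => b end.

Definition nstar (w : seq letter) : nat := count starred w.

(** Elements of C\bar Q = C<x,y,x^*,y^*> are represented by formal finite
    linear combinations of words; two representations denote the same element
    of C\bar Q iff they have the same coefficient function [coef]. *)
Definition fa := seq (CC * seq letter).

Definition coef (f : fa) (w : seq letter) : CC :=
  \sum_(t <- f | t.2 == w) t.1.

Definition fa_add (f g : fa) : fa := f ++ g.
Definition fa_scale (c : CC) (f : fa) : fa := [seq (c * t.1, t.2) | t <- f].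
Definition fa_sub (f g : fa) : fa := fa_add f (fa_scale (-1) g).
Definition fa_mul (f g : fa) : fa :=
  [seq (t.1 * u.1, t.2 ++ u.2) | t <- f, u <- g].
Definition fa_sum (l : seq fa) : fa := flatten l.
Definition mono (w : seq letter) : fa := [:: (1, w)].

Definition homog (p : nat) (f : fa) : Prop :=
  forall w, coef f w != 0 -> nstar w = p.

Definition rel_gen (P R : fa) (p r : nat) : fa :=
  fa_sub (fa_mul P R) (fa_scale ((-1) ^+ (p * r)) (fa_mul R P)).

(** [vzero f]: f lies in the (linear) span of the elements PR - (-1)^{pr} RP
    with P, R homogeneous of degrees p, r; i.e. f = 0 in VQ. *)
Definition vzero (f : fa) : Prop :=
  exists L : seq (CC * fa * fa * nat * nat),
    (forall t, t \in L -> homog t.2 t.1.1.2 /\ homog t.1.2 t.1.1.1.2) /\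
    forall w, coef f w =
      coef (fa_sum [seq fa_scale t.1.1.1.1 (rel_gen t.1.1.1.2 t.1.1.2 t.1.2 t.2)
                   | t <- L]) w.

(** Double derivation D_w on a monomial x_1 ... x_n (0-indexed position i here
    corresponds to position i+1 in the paper):
    sum over i with x_i = w of (-1)^{lambda_i mu_i} x_{i+1} ... x_n x_1 ... x_{i-1},
    lambda_i = #starred among x_{i+1..n}, mu_i = #starred among x_{1..i}. *)
Definition Dmono (a : letter) (s : seq letter) : fa :=
  [seq ((-1) ^+ (nstar (drop i.+1 s) * nstar (take i.+1 s)),
        drop i.+1 s ++ take i s)
  | i <- iota 0 (size s) & nth Lx s i == a].

Definition D (a : letter) (f : fa) : fa :=
  fa_sum [seq fa_scale t.1 (Dmono a t.2) | t <- f].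

(** [gamma, delta]_V for gamma of degree r and delta of degree s
    (computed on representatives in C\bar Q). *)
Definition vbracket (r s : nat) (g d : fa) : fa :=
  fa_sum [seq fa_sub (fa_mul (D (star a) g) (D a d))
                     (fa_scale ((-1) ^ ((r%:Z - 1) * (s%:Z - 1)))
                               (fa_mul (D (star a) d) (D a g)))
         | a <- [:: Lx; Ly]].

Definition comm (u v : fa) : fa := fa_sub (fa_mul u v) (fa_mul v u).

Definition poisson (Pi : fa) : Prop :=
  homog 2 Pi /\ vzero (vbracket 2 2 Pi Pi).

Definition compatible (P1 P2 : fa) : Prop :=
  poisson P1 /\ poisson P2 /\
  vzero (vbracket 2 2 P1 P1) /\ vzero (vbracket 2 2 P1 P2) /\
  vzero (vbracket 2 2 P2 P1) /\ vzero (vbracket 2 2 P2 P2).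

Definition x2xs_xyys : fa := fa_add (mono [:: Lx; Lx; Lxs]) (mono [:: Lx; Ly; Lys]).
Definition yxxs_y2ys : fa := fa_add (mono [:: Ly; Lx; Lxs]) (mono [:: Ly; Ly; Lys]).

Definition Pi1a : fa :=
  fa_add (comm (mono [:: Lx; Lxs]) (mono [:: Lxs]))
         (comm (mono [:: Ly; Lys]) (mono [:: Lxs])).
Definition Pi1b : fa :=
  fa_sub (comm (mono [:: Ly; Lys]) (mono [:: Lx; Lys]))
         (comm (mono [:: Lys]) x2xs_xyys).

Definition Pi2a : fa :=
  fa_add (comm (mono [:: Lx; Lxs]) (mono [:: Lxs]))
         (comm (mono [:: Ly; Lxs]) (mono [:: Lys])).
Definition Pi2b : fa := comm (mono [:: Ly; Lys]) yxxs_y2ys.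

Definition Pi3a : fa := comm (mono [:: Lx; Lys]) (mono [:: Lx; Lxs]).
Definition Pi3b : fa :=
  fa_add (comm x2xs_xyys (mono [:: Ly; Lxs]))
         (comm yxxs_y2ys (fa_add (mono [:: Lx; Lxs]) (mono [:: Ly; Lys]))).

(* In VQ every word w = u v equals (-1)^{|u||v|} v u, the relation generated
   by the monomials u and v.  Rewriting each word of an integral element to
   its lexicographically least rotation therefore produces an explicit
   element of the relation span; the element vanishes in VQ as soon as the
   rotated words cancel, which is decided by computation for each of the
   twelve Schouten brackets in the theorem. *)
From mathcomp Require Import all_boot all_algebra complex Rstruct.
Set Implicit Arguments. Unset Strict Implicit. Unset Printing Implicit Defensive.
Import GRing.Theory.
Local Open Scope ring_scope.

(* Elements of C\bar Q with integer coefficients, on which everything computes. *)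
Definition faZ := seq (int * seq letter).

Definition toC (f : faZ) : fa := [seq (t.1%:~R : CC, t.2) | t <- f].

Definition sgnZ (n : nat) : int := if odd n then -1 else 1.
Definition scaleZ (c : int) (f : faZ) : faZ := [seq (c * t.1, t.2) | t <- f].
Definition subZ (f g : faZ) : faZ := f ++ scaleZ (-1) g.
Definition mulZ (f g : faZ) : faZ := [seq (t.1 * u.1, t.2 ++ u.2) | t <- f, u <- g].
Definition monoZ (w : seq letter) : faZ := [:: (1, w)].
Definition commZ (u v : faZ) : faZ := subZ (mulZ u v) (mulZ v u).
Definition rel_genZ (P R : faZ) (p r : nat) : faZ :=
  subZ (mulZ P R) (scaleZ (sgnZ (p * r)) (mulZ R P)).
Definition DmonoZ (a : letter) (s : seq letter) : faZ :=
  [seq (sgnZ (nstar (drop i.+1 s) * nstar (take i.+1 s)), drop i.+1 s ++ take i s)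
  | i <- iota 0 (size s) & nth Lx s i == a].
Definition DZ (a : letter) (f : faZ) : faZ :=
  flatten [seq scaleZ t.1 (DmonoZ a t.2) | t <- f].
Definition vbracket22Z (g d : faZ) : faZ :=
  flatten [seq subZ (mulZ (DZ (star a) g) (DZ a d))
                    (scaleZ (-1) (mulZ (DZ (star a) d) (DZ a g)))
          | a <- [:: Lx; Ly]].

Lemma sgnZE n : (sgnZ n)%:~R = (-1) ^+ n :> CC.
Proof. by rewrite /sgnZ -signr_odd; case: (odd n); rewrite ?rmorphN1 ?rmorph1. Qed.

Lemma toC_cat f g : toC (f ++ g) = fa_add (toC f) (toC g).
Proof. exact: map_cat. Qed.

Lemma toC_scale c f : toC (scaleZ c f) = fa_scale c%:~R (toC f).
Proof. by rewrite /toC /fa_scale -!map_comp; apply: eq_map => t /=; rewrite intrM. Qed.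

Lemma toC_sub f g : toC (subZ f g) = fa_sub (toC f) (toC g).
Proof. by rewrite /subZ toC_cat toC_scale rmorphN1. Qed.

Lemma toC_mul f g : toC (mulZ f g) = fa_mul (toC f) (toC g).
Proof.
elim: f => //= t f IH; rewrite /toC /mulZ /fa_mul /= map_cat.
congr (_ ++ _); last exact: IH.
by rewrite -!map_comp; apply: eq_map => u /=; rewrite intrM.
Qed.

Lemma toC_mono w : toC (monoZ w) = mono w.
Proof. by rewrite /toC /= rmorph1. Qed.

Lemma toC_comm f g : toC (commZ f g) = comm (toC f) (toC g).
Proof. by rewrite toC_sub !toC_mul. Qed.

Lemma toC_rel_gen P R p r : toC (rel_genZ P R p r) = rel_gen (toC P) (toC R) p r.
Proof. by rewrite toC_sub toC_scale !toC_mul sgnZE. Qed.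

Lemma toC_flatten l : toC (flatten l) = fa_sum (map toC l).
Proof. by elim: l => //= f l IH; rewrite toC_cat IH. Qed.

Lemma toC_D a f : toC (DZ a f) = D a (toC f).
Proof.
rewrite /DZ /D toC_flatten -!map_comp; congr fa_sum; apply: eq_map => t /=.
rewrite toC_scale /toC /DmonoZ /Dmono -!map_comp.
by congr fa_scale; apply: eq_map => i /=; rewrite sgnZE.
Qed.

Lemma toC_vbracket22 g d : toC (vbracket22Z g d) = vbracket 2 2 (toC g) (toC d).
Proof. by rewrite toC_flatten /= !toC_sub !toC_scale !toC_mul !toC_D rmorphN1. Qed.

Definition coefZ (f : faZ) (w : seq letter) : int :=
  foldr (fun t acc => if t.2 == w then t.1 + acc else acc) 0 f.

Lemma coef_toC f w : coef (toC f) w = (coefZ f w)%:~R.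
Proof.
rewrite /coef; elim: f => [|t f IH] /=; first by rewrite big_nil.
by rewrite big_cons /= IH; case: (t.2 == w); rewrite ?rmorphD.
Qed.

Lemma coefZ_notin f w : w \notin map snd f -> coefZ f w = 0.
Proof.
elim: f => //= t f IH; rewrite in_cons negb_or => /andP[ne /IH ->].
by rewrite eq_sym (negbTE ne).
Qed.

Definition eqcoefZ (f g : faZ) : bool :=
  all (fun w => coefZ f w == coefZ g w) (map snd (f ++ g)).

Lemma eqcoefZP f g : eqcoefZ f g -> forall w, coefZ f w = coefZ g w.
Proof.
move=> /allP fg w; have [/fg/eqP //|] := boolP (w \in map snd (f ++ g)).
by rewrite map_cat mem_cat negb_or => /andP[wf wg]; rewrite !coefZ_notin.
Qed.

Definition homogZ (p : nat) (f : faZ) : bool := all (fun t => nstar t.2 == p) f.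

Lemma homogZP p f : homogZ p f -> homog p (toC f).
Proof.
move=> /allP hf w; rewrite coef_toC.
have [/mapP[t tf ->] _|/coefZ_notin ->] := boolP (w \in map snd f).
  exact/eqP/hf.
by rewrite eqxx.
Qed.

Definition rotation_rel (c : int) (u v : seq letter) : faZ :=
  scaleZ c (rel_genZ (monoZ u) (monoZ v) (nstar u) (nstar v)).

Lemma vzero_rotation_rels (F : faZ) (cert : seq (int * seq letter * seq letter)) :
  eqcoefZ F (flatten [seq rotation_rel r.1.1 r.1.2 r.2 | r <- cert]) ->
  vzero (toC F).
Proof.
move=> /eqcoefZP eqF.
exists [seq (r.1.1%:~R, mono r.1.2, mono r.2, nstar r.1.2, nstar r.2) | r <- cert].
split=> [_ /mapP[r _ ->]|w] /=.
  by split; rewrite -toC_mono; apply: homogZP; rewrite /homogZ /= eqxx.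
rewrite coef_toC eqF -coef_toC toC_flatten -!map_comp; congr (coef (fa_sum _) w).
by apply: eq_map => r; rewrite /comp /rotation_rel toC_scale toC_rel_gen !toC_mono.
Qed.

Definition letter_code (a : letter) : nat :=
  match a with Lx => 0 | Ly => 1 | Lxs => 2 | Lys => 3 end.

Fixpoint word_le (u v : seq letter) : bool :=
  match u, v with
  | [::], _ => true
  | _ :: _, [::] => false
  | a :: u', b :: v' =>
      (letter_code a < letter_code b)%N || (a == b) && word_le u' v'
  end.

Definition least_rotation_index (w : seq letter) : nat :=
  foldl (fun k i => if word_le (rot k w) (rot i w) then k else i)
        0 (iota 0 (size w)).

(* Splits each word w = u v so that v u is its least rotation; nothing about
   this choice needs proving, since the resulting relations are checked. *)
Definition rotation_certificate (F : faZ) : seq (int * seq letter * seq letter) :=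
  [seq let k := least_rotation_index t.2 in (t.1, take k t.2, drop k t.2) | t <- F].

Definition cyclic_zeroZ (F : faZ) : bool :=
  eqcoefZ F (flatten [seq rotation_rel r.1.1 r.1.2 r.2 | r <- rotation_certificate F]).

Lemma compatible_toC A B :
  homogZ 2 A -> homogZ 2 B ->
  cyclic_zeroZ (vbracket22Z A A) -> cyclic_zeroZ (vbracket22Z A B) ->
  cyclic_zeroZ (vbracket22Z B A) -> cyclic_zeroZ (vbracket22Z B B) ->
  compatible (toC A) (toC B).
Proof.
move=> /homogZP hA /homogZP hB /vzero_rotation_rels vAA /vzero_rotation_rels vAB
  /vzero_rotation_rels vBA /vzero_rotation_rels vBB.
rewrite !toC_vbracket22 in vAA vAB vBA vBB.
by do !split.
Qed.

Definition x2xs_xyysZ : faZ := monoZ [:: Lx; Lx; Lxs] ++ monoZ [:: Lx; Ly; Lys].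
Definition yxxs_y2ysZ : faZ := monoZ [:: Ly; Lx; Lxs] ++ monoZ [:: Ly; Ly; Lys].

Definition Pi1aZ : faZ :=
  commZ (monoZ [:: Lx; Lxs]) (monoZ [:: Lxs]) ++ commZ (monoZ [:: Ly; Lys]) (monoZ [:: Lxs]).
Definition Pi1bZ : faZ :=
  subZ (commZ (monoZ [:: Ly; Lys]) (monoZ [:: Lx; Lys])) (commZ (monoZ [:: Lys]) x2xs_xyysZ).
Definition Pi2aZ : faZ :=
  commZ (monoZ [:: Lx; Lxs]) (monoZ [:: Lxs]) ++ commZ (monoZ [:: Ly; Lxs]) (monoZ [:: Lys]).
Definition Pi2bZ : faZ := commZ (monoZ [:: Ly; Lys]) yxxs_y2ysZ.
Definition Pi3aZ : faZ := commZ (monoZ [:: Lx; Lys]) (monoZ [:: Lx; Lxs]).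
Definition Pi3bZ : faZ :=
  commZ x2xs_xyysZ (monoZ [:: Ly; Lxs])
  ++ commZ yxxs_y2ysZ (monoZ [:: Lx; Lxs] ++ monoZ [:: Ly; Lys]).

Lemma toC_brackets :
  [/\ Pi1a = toC Pi1aZ /\ Pi1b = toC Pi1bZ, Pi2a = toC Pi2aZ /\ Pi2b = toC Pi2bZ
    & Pi3a = toC Pi3aZ /\ Pi3b = toC Pi3bZ].
Proof.
rewrite /Pi1aZ /Pi1bZ /Pi2aZ /Pi2bZ /Pi3aZ /Pi3bZ /x2xs_xyysZ /yxxs_y2ysZ.
do !split.
- by rewrite toC_cat !toC_comm !toC_mono.
- by rewrite toC_sub !toC_comm toC_cat !toC_mono.
- by rewrite toC_cat !toC_comm !toC_mono.
- by rewrite toC_comm toC_cat !toC_mono.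
- by rewrite toC_comm !toC_mono.
- by rewrite toC_cat !toC_comm !toC_cat !toC_mono.
Qed.

Theorem mainTheorem7 :
  compatible Pi1a Pi1b /\ compatible Pi2a Pi2b /\ compatible Pi3a Pi3b.
Proof.
have [[-> ->] [-> ->] [-> ->]] := toC_brackets.
by split; [|split]; apply: compatible_toC; vm_compute.
Qed.
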